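(* Assume $\bar\Phi_p=0$ and $\Phi_p^\top\Phi_p=\mathrm{diag}(\sigma_1^2,\dots,\sigma_d^2)$ with all $\sigma_j^2>0$. Let $\Lambda=\mathrm{diag}(\lambda_1,\dots,\lambda_d)$ with $\lambda_j\ge0$, let $\hat\beta^\Lambda_{\mathrm{ridge}}:=(\Phi_p^\top\Phi_p+\Lambda)^{-1}\Phi_p^\top Y_p$, let $\delta\ge 0$, and let $\hat w^\delta_{\ell_2}$ be the $\ell_2$ balancing weights, $\tfrac1n\hat w^\delta_{\ell_2}=\bar\Phi_q(\Phi_p^\top\Phi_p+\delta I)^{-1}\Phi_p^\top$. Define $\Gamma=\mathrm{diag}(\gamma_1,\dots,\gamma_d)$ with $$\gamma_j:=\frac{\delta\lambda_j}{\sigma_j^2+\lambda_j+\delta}$$ (with $\gamma_j:=0$ if the denominator is $0$ is impossible here since $\sigma_j^2>0$). Then $0\le\gamma_j\le\lambda_j$ for all $j$ and $$\bar\Phi_q\hat\beta^\Lambda_{\mathrm{ridge}}+\tfrac1n\hat w^\delta_{\ell_2}(Y_p-\Phi_p\hat\beta^\Lambda_{\mathrm{ridge}})=\bar\Phi_q\hat\beta^\Gamma_{\mathrm{ridge}},\qquad \hat\beta^\Gamma_{\mathrm{ridge}}:=(\Phi_p^\top\Phi_p+\Gamma)^{-1}\Phi_p^\top Y_p.$$ Moreover, if $\lambda_j=\lambda$ and $\sigma_j=\sigma$ for all $j$, then all $\gamma_j$ are equal, so $\hat\beta^\Gamma_{\mathrm{ridge}}$ is a standard ridge regression estimator.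
   Context: $\Phi_p\in\mathbb{R}^{n\times d}$ (source features), $Y_p\in\mathbb{R}^n$ (outcomes), $\Phi_q\in\mathbb{R}^{n\times d}$ (target features); $\bar\Phi_p,\bar\Phi_q\in\mathbb{R}^{1\times d}$ are column averages. The left-hand side is the augmented (''double ridge'') estimator combining a generalized ridge outcome model with $\ell_2$ balancing weights. *)

From HB Require Import structures.
From mathcomp Require Import all_boot all_order all_algebra.
Set Implicit Arguments. Unset Strict Implicit. Unset Printing Implicit Defensive.
Import Order.TTheory GRing.Theory Num.Theory.
Local Open Scope ring_scope.

Definition colmean (R : fieldType) (n d : nat) (Phi : 'M[R]_(n, d)) : 'rV[R]_d :=
  (n%:R)^-1 *: (const_mx 1 *m Phi).

Definition ridge (R : fieldType) (n d : nat) (Phi : 'M[R]_(n, d)) (Y : 'cV[R]_n)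
  (lam : 'rV[R]_d) : 'cV[R]_d :=
  invmx (Phi^T *m Phi + diag_mx lam) *m Phi^T *m Y.

Definition l2w_over_n (R : fieldType) (n d : nat) (Phip Phiq : 'M[R]_(n, d))
  (delta : R) : 'rV[R]_n :=
  colmean Phiq *m invmx (Phip^T *m Phip + delta%:M) *m Phip^T.

Definition gammavec (R : fieldType) (d : nat) (sigma2 lam : 'rV[R]_d) (delta : R)
  : 'rV[R]_d :=
  \row_j (delta * lam 0 j / (sigma2 0 j + lam 0 j + delta)).

From HB Require Import structures.
From mathcomp Require Import all_boot all_order all_algebra.
From mathcomp Require Import ring lra.
Import Order.TTheory GRing.Theory Num.Theory.
Local Open Scope ring_scope.

(* The augmented ("double ridge") estimator collapses to a single generalized
   ridge estimator when the source Gram matrix Phi_p^T Phi_p = diag(sigma2) is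
   diagonal, because then every matrix in sight is diagonal and the whole
   computation decouples coordinate by coordinate.
   - First, generic facts on diagonal matrices: products and inverses.
   - Second, under a diagonal Gram matrix, the ridge estimator and the l2
     balancing weights are explicit diagonal rescalings of Phi_p^T Y_p and
     Phi_p^T, so the augmented estimator equals barPhi_q diag(c) Phi_p^T Y_p,
     where c_j = 1/(s+l) + (1 - s/(s+l))/(s+delta) with s = sigma_j^2, l = lambda_j.
   - Third, the scalar identity c_j = 1/(s + gamma_j), which identifies the
     augmented estimator with the ridge estimator of penalty Gamma, and the
     bounds 0 <= gamma_j <= lambda_j.
   The main theorem assembles these three pieces. *)

Section DiagonalMatrices.
Variable R : fieldType.
Variable d : nat.
Implicit Types a b : 'rV[R]_d.

Lemma diag_mxM a b : diag_mx a *m diag_mx b = diag_mx (\row_j (a 0 j * b 0 j)).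
Proof.
rewrite mul_diag_mx; apply/matrixP => i j; rewrite !mxE.
by case: eqVneq => [->|_]; rewrite ?mulr0 ?mulr1n ?mulr0n.
Qed.

Lemma invmx_diag a :
  (forall j, a 0 j != 0) -> invmx (diag_mx a) = diag_mx (\row_j (a 0 j)^-1).
Proof.
move=> a_nz.
have aK : diag_mx a *m diag_mx (\row_j (a 0 j)^-1) = 1%:M.
  by rewrite diag_mxM -diag_const_mx; congr diag_mx; apply/matrixP => i j;
     rewrite !mxE mulfV.
have [a_unit _] := mulmx1_unit aK.
by rewrite -[RHS](mulKmx a_unit) aK mulmx1.
Qed.

End DiagonalMatrices.

Definition augmented_ridge {R : fieldType} {n d : nat} (Phip Phiq : 'M[R]_(n, d))
  (Y : 'cV[R]_n) (lam : 'rV[R]_d) (delta : R) : 'rV[R]_1 :=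
  colmean Phiq *m ridge Phip Y lam
    + l2w_over_n Phip Phiq delta *m (Y - Phip *m ridge Phip Y lam).

Definition augmented_factor {R : fieldType} (s l delta : R) : R :=
  (s + l)^-1 + (s + delta)^-1 * (1 - s * (s + l)^-1).

Section DiagonalGram.
Variables (R : fieldType) (n d : nat).
Variables (Phip Phiq : 'M[R]_(n, d)) (Y : 'cV[R]_n) (sigma2 : 'rV[R]_d).
Hypothesis gram_diag : Phip^T *m Phip = diag_mx sigma2.

Lemma ridge_diag_gram (lam : 'rV[R]_d) :
  (forall j, sigma2 0 j + lam 0 j != 0) ->
  ridge Phip Y lam = diag_mx (\row_j (sigma2 0 j + lam 0 j)^-1) *m (Phip^T *m Y).
Proof.
move=> nz; rewrite /ridge gram_diag -raddfD invmx_diag -?mulmxA.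
  by congr (diag_mx _ *m _); apply/matrixP => i j; rewrite !mxE.
by move=> j; rewrite mxE.
Qed.

Lemma l2w_diag_gram (delta : R) :
  (forall j, sigma2 0 j + delta != 0) ->
  l2w_over_n Phip Phiq delta
    = colmean Phiq *m diag_mx (\row_j (sigma2 0 j + delta)^-1) *m Phip^T.
Proof.
move=> nz; rewrite /l2w_over_n gram_diag -diag_const_mx -raddfD invmx_diag.
  by congr (_ *m diag_mx _ *m _); apply/matrixP => i j; rewrite !mxE.
by move=> j; rewrite !mxE.
Qed.

Lemma augmented_ridge_diag_gram (lam : 'rV[R]_d) (delta : R) :
  (forall j, sigma2 0 j + lam 0 j != 0) ->
  (forall j, sigma2 0 j + delta != 0) ->
  augmented_ridge Phip Phiq Y lam delta
    = colmean Phiq *m diag_mx (\row_j augmented_factor (sigma2 0 j) (lam 0 j) delta)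
        *m (Phip^T *m Y).
Proof.
move=> nz_lam nz_delta.
rewrite /augmented_ridge ridge_diag_gram // l2w_diag_gram //.
set D1 := diag_mx _; set D2 := diag_mx _; set X := Phip^T *m Y.
have residual : Phip^T *m (Y - Phip *m (D1 *m X)) = (1%:M - diag_mx sigma2 *m D1) *m X.
  by rewrite mulmxBr (mulmxA Phip^T) gram_diag mulmxBl mul1mx mulmxA.
rewrite -!mulmxA residual -mulmxDr (mulmxA D2) -mulmxDl.
congr (_ *m (_ *m X)).
rewrite -diag_const_mx !diag_mxM -raddfB diag_mxM -raddfD.
by congr diag_mx; apply/matrixP => i j; rewrite !mxE.
Qed.

End DiagonalGram.

Arguments ridge_diag_gram {R n d Phip Y sigma2}.
Arguments augmented_ridge_diag_gram {R n d Phip Phiq Y sigma2}.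

Lemma augmented_factorE (R : fieldType) (s l delta : R) :
  s + l != 0 -> s + delta != 0 -> s + l + delta != 0 ->
  augmented_factor s l delta = (s + delta * l / (s + l + delta))^-1.
Proof.
move=> nz_l nz_delta nz_sum.
have -> : s + delta * l / (s + l + delta) = (s + l) * (s + delta) / (s + l + delta)
  by field.
by rewrite invfM invrK /augmented_factor; field; rewrite nz_l nz_delta.
Qed.

Lemma effective_penalty_bounds (R : realFieldType) (s l delta : R) :
  0 < s -> 0 <= l -> 0 <= delta ->
  0 <= delta * l / (s + l + delta) <= l.
Proof.
move=> s_gt0 l_ge0 delta_ge0.
have sum_gt0 : 0 < s + l + delta by lra.
apply/andP; split; first by rewrite divr_ge0 ?mulr_ge0 // ltW.
by rewrite ler_pdivrMr //; nra.
Qed.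

Theorem mainTheorem5 (R : realFieldType) (n d : nat)
  (Phip Phiq : 'M[R]_(n, d)) (Yp : 'cV[R]_n)
  (sigma2 lam : 'rV[R]_d) (delta : R) :
  colmean Phip = 0 ->
  Phip^T *m Phip = diag_mx sigma2 ->
  (forall j, 0 < sigma2 0 j) ->
  (forall j, 0 <= lam 0 j) ->
  0 <= delta ->
  let gam := gammavec sigma2 lam delta in
  let bL := ridge Phip Yp lam in
  [/\ (forall j, 0 <= gam 0 j <= lam 0 j),
      colmean Phiq *m bL + l2w_over_n Phip Phiq delta *m (Yp - Phip *m bL)
        = colmean Phiq *m ridge Phip Yp gam
    & ((exists l, forall j, lam 0 j = l) ->
       (exists s, forall j, sigma2 0 j = s) ->
       exists g, forall j, gam 0 j = g)].
Proof.
move=> _ gram_diag s_gt0 lam_ge0 delta_ge0 gam bL.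
have gamE j : gam 0 j = delta * lam 0 j / (sigma2 0 j + lam 0 j + delta).
  by rewrite mxE.
have gam_bounds j : 0 <= gam 0 j <= lam 0 j.
  by rewrite gamE effective_penalty_bounds.
have nz_lam j : sigma2 0 j + lam 0 j != 0.
  by apply: lt0r_neq0; have := s_gt0 j; have := lam_ge0 j; lra.
have nz_delta j : sigma2 0 j + delta != 0 by apply: lt0r_neq0; have := s_gt0 j; lra.
have nz_sum j : sigma2 0 j + lam 0 j + delta != 0.
  by apply: lt0r_neq0; have := s_gt0 j; have := lam_ge0 j; lra.
have nz_gam j : sigma2 0 j + gam 0 j != 0.
  by apply: lt0r_neq0; have := s_gt0 j; have /andP[+ _] := gam_bounds j; lra.
split=> //.
- rewrite -/(augmented_ridge _ _ _ _ _).
  rewrite (augmented_ridge_diag_gram gram_diag) //.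
  rewrite (ridge_diag_gram gram_diag) // !mulmxA.
  congr (_ *m diag_mx _ *m _ *m _).
  by apply/matrixP => i j; rewrite !mxE augmented_factorE // gamE.
- by move=> [l lamE] [s sigmaE]; exists (delta * l / (s + l + delta)) => j;
     rewrite gamE lamE sigmaE.
Qed.
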